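(* Let $(X,d)$ be a proper geodesic metric space with a distinguished base point $0$, and let $(x_n)$ be a sequence in $X$ converging to a point $\omega\in\partial_d X$ of the metric boundary. Then $(x_n)$ converges to infinity in the Gromov sense, i.e. $\lim_{n,m\to\infty}(x_n\cdot x_m)=\infty$.
   Context: A metric space is proper if closed bounded sets are compact, and geodesic if any two points $x,y$ are joined by an isometric image of $[0,d(x,y)]$. The Gromov product with respect to the base point $0$ is $(x\cdot y)=\tfrac12\big(d(x,0)+d(y,0)-d(x,y)\big)$. For $y\in X$ let $\varphi_y(x)=d(x,0)-d(x,y)$. The metric compactification $\overline{X}^d$ is the maximal ideal space of the commutative unital C*-algebra generated by the continuous functions vanishing at infinity on $X$, the constants, and the functions $\varphi_y$ ($y\in X$); the metric boundary is $\partial_d X=\overline{X}^d\setminus X$. Concretely, a sequence $(x_n)$ in $X$ converges to a point of $\partial_d X$ iff it eventually leaves every compact subset of $X$ and $\varphi_y(x_n)$ converges for every $y\in X$; two such sequences converge to the same boundary point iff the limits of $\varphi_z$ along them agree for every $z\in X$. *)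

From Stdlib Require Import Reals List.
Open Scope R_scope.

Section MetricDefs.
Variables (X : Type) (d : X -> X -> R).

Definition is_metric : Prop :=
  (forall x y, 0 <= d x y) /\
  (forall x y, d x y = 0 <-> x = y) /\
  (forall x y, d x y = d y x) /\
  (forall x y z, d x z <= d x y + d y z).

Definition mopen (U : X -> Prop) : Prop :=
  forall x, U x -> exists eps, 0 < eps /\ forall y, d x y < eps -> U y.

Definition mclosed (F : X -> Prop) : Prop := mopen (fun x => ~ F x).

Definition mbounded (F : X -> Prop) : Prop :=
  exists (c : X) (r : R), forall x, F x -> d c x <= r.

Definition mcompact (K : X -> Prop) : Prop :=
  forall (I : Type) (U : I -> X -> Prop),
    (forall i, mopen (U i)) ->
    (forall x, K x -> exists i, U i x) ->
    exists l : list I, forall x, K x -> exists i, In i l /\ U i x.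

Definition proper_space : Prop :=
  forall F, mclosed F -> mbounded F -> mcompact F.

Definition geodesic_space : Prop :=
  forall x y, exists g : R -> X,
    g 0 = x /\ g (d x y) = y /\
    forall s t, 0 <= s <= d x y -> 0 <= t <= d x y ->
      d (g s) (g t) = Rabs (s - t).

Definition gromov_prod (o x y : X) : R := (d x o + d y o - d x y) / 2.

Definition phi (o y x : X) : R := d x o - d x y.

(** (x_n) converges to a point of the metric boundary ∂_d X
    (concrete characterization from the context): it eventually leaves every
    compact set, and phi_y(x_n) converges for every y. *)
Definition converges_to_metric_boundary (o : X) (x : nat -> X) : Prop :=
  (forall K, mcompact K -> exists N, forall n, (N <= n)%nat -> ~ K (x n)) /\
  (forall y, exists l, Un_cv (fun n => phi o y (x n)) l).

Definition gromov_to_infinity (o : X) (x : nat -> X) : Prop :=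
  forall M : R, exists N, forall n m, (N <= n)%nat -> (N <= m)%nat ->
    M <= gromov_prod o (x n) (x m).

End MetricDefs.

(* Fix a level t and let z_n be the point at distance t from 0 on a geodesic
   from 0 to x_n (which exists once x_n has left the closed t-ball).  Then
   phi_{z_n}(x_n) = t, and the triangle inequality through z_n gives
   2 (x_n . x_m) >= phi_{z_n}(x_n) + phi_{z_n}(x_m).  The t-ball is compact,
   so it is covered by finitely many unit balls around w_1, ..., w_k; each
   phi_{w_i} is 1-Lipschitz in its index and converges along (x_n), so for
   large n, m the value phi_{z_n}(x_m) stays within 3 of phi_{z_n}(x_n) = t.
   Hence (x_n . x_m) >= t - 3/2 eventually. *)
From Stdlib Require Import Reals Lra Lia List.
Open Scope R_scope.

Section MetricSpace.
Variables (X : Type) (d : X -> X -> R).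
Hypothesis hmet : is_metric X d.

Lemma dist_sym (x y : X) : d x y = d y x.
Proof. now destruct hmet as [_ [_ [hsym _]]]. Qed.

Lemma dist_triangle (x y z : X) : d x z <= d x y + d y z.
Proof. now destruct hmet as [_ [_ [_ htri]]]. Qed.

Lemma dist_refl (x : X) : d x x = 0.
Proof. destruct hmet as [_ [hzero _]]. now apply hzero. Qed.

Lemma phi_sum_le_gromov_prod (o z x y : X) :
  phi X d o z x + phi X d o z y <= 2 * gromov_prod X d o x y.
Proof.
  unfold phi, gromov_prod.
  pose proof (dist_triangle x z y). rewrite (dist_sym y z). lra.
Qed.

Lemma phi_lipschitz (o z w y : X) :
  - d w z <= phi X d o z y - phi X d o w y <= d w z.
Proof.
  unfold phi.
  pose proof (dist_triangle y w z). pose proof (dist_triangle y z w).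
  rewrite (dist_sym z w) in *. split; lra.
Qed.

Lemma closed_ball_compact (o : X) (t : R) :
  proper_space X d -> mcompact X d (fun y => d o y <= t).
Proof.
  intro hprop. apply hprop.
  - intros y Hy. exists (d o y - t). split; [lra|].
    intros y' Hy'. pose proof (dist_triangle o y' y).
    rewrite (dist_sym y' y) in *. lra.
  - now exists o, t.
Qed.

Lemma compact_finite_net (K : X -> Prop) (eps : R) :
  mcompact X d K -> 0 < eps ->
  exists l : list X, forall z, K z -> exists w, In w l /\ d w z < eps.
Proof.
  intros hK heps.
  apply (hK X (fun w y => d w y < eps)).
  - intros w y Hy. exists (eps - d w y). split; [lra|].
    intros y' Hy'. pose proof (dist_triangle w y y'). lra.
  - intros y _. exists y. rewrite dist_refl. exact heps.
Qed.

Lemma geodesic_point_at_distance (o x : X) (t : R) :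
  geodesic_space X d -> 0 <= t <= d o x ->
  exists z, d o z = t /\ d z x = d o x - t.
Proof.
  intros hgeo Ht. destruct (hgeo o x) as [g [g0 [gD giso]]].
  exists (g t). split.
  - rewrite <- g0 at 1. rewrite giso by lra.
    rewrite Rminus_0_l, Rabs_Ropp, Rabs_right; lra.
  - replace (d (g t) x) with (d (g t) (g (d o x))) by now rewrite gD.
    rewrite giso by lra.
    rewrite Rabs_minus_sym, Rabs_right; lra.
Qed.

End MetricSpace.

Lemma cauchy_uniform_on_list (A : Type) (u : A -> nat -> R)
  (hcv : forall a, exists l, Un_cv (u a) l) (eps : R) (l : list A) :
  0 < eps ->
  exists N, forall a n m, In a l -> (N <= n)%nat -> (N <= m)%nat ->
    Rabs (u a n - u a m) < eps.
Proof.
  intro heps. induction l as [|a l [N1 H1]].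
  - exists 0%nat. intros a n m [].
  - destruct (hcv a) as [La HLa].
    destruct (CV_Cauchy (u a) (exist _ La HLa) eps heps) as [N2 H2].
    exists (Nat.max N1 N2). intros a' n m [<-|Hin] Hn Hm.
    + apply H2; unfold ge; lia.
    + apply H1; auto; lia.
Qed.

Theorem mainTheorem2 (X : Type) (d : X -> X -> R) (o : X)
  (hmet : is_metric X d) (hprop : proper_space X d) (hgeo : geodesic_space X d)
  (x : nat -> X) (hx : converges_to_metric_boundary X d o x) :
  gromov_to_infinity X d o x.
Proof.
  destruct hx as [hesc hcv]. intro M.
  set (t := Rabs M + 2).
  assert (Ht : 0 <= t /\ M + 2 <= t).
  { pose proof (Rabs_pos M). pose proof (Rle_abs M). unfold t. lra. }
  pose proof (closed_ball_compact X d hmet o t hprop) as hball.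
  destruct (hesc _ hball) as [N1 Hleave].
  destruct (compact_finite_net X d hmet _ 1 hball Rlt_0_1) as [l Hnet].
  destruct (cauchy_uniform_on_list X (fun w n => phi X d o w (x n)) hcv 1 l Rlt_0_1)
    as [N2 Hcauchy].
  exists (Nat.max N1 N2). intros n m Hn Hm.
  assert (Hfar : t <= d o (x n)) by (apply Rnot_lt_le; intro; apply (Hleave n); [lia | lra]).
  destruct (geodesic_point_at_distance X d o (x n) t hgeo ltac:(lra)) as [z [Hoz Hzx]].
  assert (Hphi_n : phi X d o z (x n) = t).
  { unfold phi. rewrite (dist_sym X d hmet (x n) o), (dist_sym X d hmet (x n) z). lra. }
  destruct (Hnet z ltac:(lra)) as [w [Hw Hwz]].
  pose proof (Hcauchy w n m Hw ltac:(lia) ltac:(lia)) as Hnm.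
  pose proof (phi_lipschitz X d hmet o z w (x n)) as Lip_n.
  pose proof (phi_lipschitz X d hmet o z w (x m)) as Lip_m.
  pose proof (phi_sum_le_gromov_prod X d hmet o z (x n) (x m)).
  apply Rabs_def2 in Hnm. simpl in Hnm. lra.
Qed.
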